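(* Consider an instance of the Steiner Team Orienteering Problem and the formulation $\mathcal{F}_2$ as described in the context, and let $\mathcal{K}$ be the set of conflicting vertex pairs. For every feasible solution $(x,y,f,\varphi)$ of $\mathcal{F}_2$, every pair $\langle i,j\rangle\in\mathcal{K}$ and every $V\subseteq N\setminus\{s\}$ with $\{i,j\}\subseteq V$, we have $\sum_{e\in\delta^-(V)}x_e\ge y_i+y_j$.
   Context: An instance of the Steiner Team Orienteering Problem (STOP) consists of: a digraph $G=(N,A)$; an origin $s\in N$ and a destination $t\in N$ with $s\neq t$; disjoint sets $S,P\subseteq N\setminus\{s,t\}$ (mandatory and profitable vertices) with $N=S\cup P\cup\{s,t\}$; rewards $p_i\in\mathbb{Z}^+$ for $i\in P$; traverse times $d_{ij}\in\mathbb{R}^+$ for $(i,j)\in A$; a number $m$ of vehicles and a time limit $T$. For $i\in N$ let $\delta^+(i)=\{j\in N:(i,j)\in A\}$ and $\delta^-(i)=\{j\in N:(j,i)\in A\}$; for $V\subseteq N$ let $\delta^+(V)=\{(i,j)\in A: i\in V, j\in N\setminus V\}$ and $\delta^-(V)=\{(i,j)\in A: i\in N\setminus V, j\in V\}$. For $i,j\in N$, $R_{ij}$ denotes the minimum of $\sum_{a\in A_p}d_a$ over all paths $p$ from $i$ to $j$ in $G$ (with arc set $A_p$), and $R_{ii}=0$. $\mathcal{K}$ is the set of pairs $\langle i,j\rangle$ with $i,j\in N\setminus\{s,t\}$ such that every route from $s$ to $t$ in $G$ visiting both $i$ and $j$ (in any order) has total traverse time (sum of $d$ over its arcs) exceeding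 $T$. $\mathcal{F}_2$: maximize $\sum_{i\in P}p_iy_i$ over $x\in\{0,1\}^A$, $y\in\{0,1\}^N$, $f\in\mathbb{R}^A$, $\varphi\in\mathbb{R}$ subject to: $y_i=1$ for all $i\in S\cup\{s,t\}$; $\sum_{j\in\delta^+(i)}x_{ij}=y_i$ for all $i\in S\cup P$; $\sum_{j\in\delta^+(s)}x_{sj}=\sum_{i\in\delta^-(t)}x_{it}=m-\varphi$; $\sum_{i\in\delta^-(s)}x_{is}=\sum_{j\in\delta^+(t)}x_{tj}=0$; $\sum_{j\in\delta^+(i)}x_{ij}-\sum_{j\in\delta^-(i)}x_{ji}=0$ for all $i\in S\cup P$; $f_{sj}=(T-d_{sj})x_{sj}$ for all $j\in\delta^+(s)$; $\sum_{j\in\delta^-(i)}f_{ji}-\sum_{j\in\delta^+(i)}f_{ij}=\sum_{j\in\delta^+(i)}d_{ij}x_{ij}$ for all $i\in S\cup P$; $f_{ij}\le(T-R_{si}-d_{ij})x_{ij}$ for all $(i,j)\in A$ with $i\neq s$; $f_{ij}\ge R_{jt}x_{ij}$ for all $(i,j)\in A$; $f\ge0$; $0\le\varphi\le m$. *)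

From HB Require Import structures.
From mathcomp Require Import all_boot all_order all_algebra.
Set Implicit Arguments. Unset Strict Implicit. Unset Printing Implicit Defensive.
Import Order.TTheory GRing.Theory Num.Theory.
Local Open Scope ring_scope.

Section STOP.
Variables (R : realFieldType) (N : finType).
Variable (A : rel N).
Variable (d : N -> N -> R).    (* traverse times, meaningful on arcs *)

Fixpoint plen (i : N) (p : seq N) : R :=
  if p is k :: q then d i k + plen k q else 0.

Definition is_path (i j : N) (p : seq N) : bool :=
  [&& path A i p, last i p == j & uniq (i :: p)].

(* Rd i j is the shortest-path distance R_ij (None = +infinity, i.e. no path). *)
Definition shortest_dist (Rd : N -> N -> option R) : Prop :=
  forall i j, match Rd i j with
  | Some r => (exists2 p, is_path i j p & plen i p = r) /\
              (forall p, is_path i j p -> r <= plen i p)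
  | None => forall p, ~~ is_path i j p
  end.

Definition conflicting (s t : N) (T : R) (i j : N) : Prop :=
  [/\ i != s, i != t, j != s, j != t &
   forall p, is_path s t p -> i \in s :: p -> j \in s :: p -> T < plen s p].

Record F2_feasible (S P : {set N}) (s t : N) (m : nat) (T : R)
  (Rd : N -> N -> option R)
  (x : N -> N -> R) (y : N -> R) (f : N -> N -> R) (phi : R) : Prop := {
  F2_x01 : forall i j, A i j -> x i j = 0 \/ x i j = 1;
  F2_y01 : forall i, y i = 0 \/ y i = 1;
  F2_ymand : forall i, (i \in S) || (i == s) || (i == t) -> y i = 1;
  F2_deg : forall i, i \in S :|: P -> \sum_(j | A i j) x i j = y i;
  F2_out_s : \sum_(j | A s j) x s j = m%:R - phi;
  F2_in_t : \sum_(i | A i t) x i t = m%:R - phi;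
  F2_in_s : \sum_(i | A i s) x i s = 0;
  F2_out_t : \sum_(j | A t j) x t j = 0;
  F2_cons : forall i, i \in S :|: P ->
     \sum_(j | A i j) x i j - \sum_(j | A j i) x j i = 0;
  F2_fs : forall j, A s j -> f s j = (T - d s j) * x s j;
  F2_fcons : forall i, i \in S :|: P ->
     \sum_(j | A j i) f j i - \sum_(j | A i j) f i j
       = \sum_(j | A i j) d i j * x i j;
  (* f_ij <= (T - R_si - d_ij) x_ij ; if R_si = +oo, use (-oo) * 0 = 0 *)
  F2_fub : forall i j, A i j -> i != s ->
     match Rd s i return Prop with
     | Some r => f i j <= (T - r - d i j) * x i j
     | None => x i j = 0 /\ f i j <= 0
     end;
  (* f_ij >= R_jt x_ij ; if R_jt = +oo, use (+oo) * 0 = 0 *)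
  F2_flb : forall i j, A i j ->
     match Rd j t return Prop with
     | Some r => r * x i j <= f i j
     | None => x i j = 0
     end;
  F2_fnn : forall i j, A i j -> 0 <= f i j;
  F2_phi : 0 <= phi <= m%:R }.

Definition in_cut (V : {set N}) (x : N -> N -> R) : R :=
  \sum_(e : N * N | [&& A e.1 e.2, e.1 \notin V & e.2 \in V]) x e.1 e.2.

End STOP.

From HB Require Import structures.
From mathcomp Require Import all_boot all_order all_algebra.
From mathcomp Require Import lra.
Import Order.TTheory GRing.Theory Num.Theory.

(* The arcs with x = 1 carry the routes.  Since f is the time still available
   on an arc, the flow entering a vertex u is the budget left on arrival at u
   (T at s), and flow conservation gives f_uv = budget(u) - d_uv on a used arc.
   So the budget strictly decreases along the routes: they are simple s-t paths
   of length at most T, every visited vertex is reached from s and reaches t,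
   and no vertex other than s branches.  A visited vertex of V is reached
   through a used arc entering V.  If visited vertices i and j were reached
   through the same entering arc, the absence of branching would put them on
   one route, a route of length at most T through both i and j, contradicting
   <i, j> in K. *)

Section Potential.
Context {disp : Order.disp_t} {O : orderType disp} {V : finType}.
Context {e : rel V} {h : V -> O}.
Hypothesis h_decr : forall u v, e u v -> (h v < h u)%O.

Lemma potential_path_uniq u p : path e u p -> uniq (u :: p).
Proof.
move=> pp; apply: (@sorted_uniq _ [rel a b | h b < h a]%O).
- by move=> b a c /= hab hbc; exact: lt_trans hbc hab.
- by move=> a /=; rewrite ltxx.
- by apply: sub_path pp => a b /h_decr.
Qed.

Lemma potential_source (Q : pred V) w : Q w ->
  exists u, [/\ Q u, connect e u w & forall a, e a u -> ~~ Q a].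
Proof.
move=> Qw; have Cw : [pred u | Q u && connect e u w] w by rewrite /= Qw connect0.
case: (arg_maxP h Cw) => u /andP[Qu uw] umax.
exists u; split=> // a au; apply/negP=> Qa.
have := umax a; rewrite /= Qa (connect_trans (connect1 au) uw) => /(_ isT).
by rewrite leNgt h_decr.
Qed.

Lemma potential_sink w : exists2 v, connect e w v & forall z, ~~ e v z.
Proof.
have Cw : [pred v | connect e w v] w by rewrite /= connect0.
case: (arg_minP h Cw) => v /= wv vmin.
exists v => // z; apply/negP=> vz.
by have := vmin z (connect_trans wv (connect1 vz)); rewrite leNgt h_decr.
Qed.

End Potential.

Lemma connect_comparable {V : finType} {e : rel V} {D : pred V} [b a c] :
    (forall u v v', D u -> e u v -> e u v' -> v = v') ->
    (forall u v, e u v -> D v) ->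
    D b -> connect e b a -> connect e b c ->
  connect e a c || connect e c a.
Proof.
move=> efun eD Db /connectP[p]; elim: p b Db => [|v p IH] b Db /=.
  by move=> _ -> ->.
case/andP=> bv pv ea /connectP[[|w q] /=].
  by move=> _ ->; apply/orP; right; apply/connectP; exists (v :: p); rewrite //= bv.
case/andP=> bw qw ec; rewrite -(efun _ _ _ Db bv bw) in qw ec.
by apply: IH (eD _ _ bv) pv ea _; apply/connectP; exists q.
Qed.

Local Open Scope ring_scope.

Lemma ler_psum_term {R : numDomainType} {I : finType} {Pr : pred I}
    {F : I -> R} {v : I} :
  (forall k, Pr k -> 0 <= F k) -> Pr v -> F v <= \sum_(k | Pr k) F k.
Proof.
move=> F0 Pv; rewrite (bigD1 v) //= lerDl.
by apply: sumr_ge0 => k /andP[/F0].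
Qed.

Lemma psumr_eq_term {R : numDomainType} {I : finType} {Pr : pred I}
    {F : I -> R} {v : I} :
    (forall k, Pr k -> 0 <= F k) -> Pr v -> \sum_(k | Pr k) F k = F v ->
  forall k, Pr k -> k != v -> F k = 0.
Proof.
move=> F0 Pv; rewrite (bigD1 v) //= -[RHS]addr0 => /addrI rest0 k Pk kv.
by apply: (psumr_eq0P _ rest0); [move=> l /andP[/F0] | rewrite Pk kv].
Qed.

Section F2Routes.
Context {R : realFieldType} {N : finType} {A : rel N} {d : N -> N -> R}
  {S P : {set N}} {s t : N} {m : nat} {T : R} {Rd : N -> N -> option R}
  {x : N -> N -> R} {y : N -> R} {f : N -> N -> R} {phi : R}.
Hypotheses (hst : s != t)
  (hN : forall v : N, (v \in S :|: P) || (v == s) || (v == t))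
  (hd : forall i j, A i j -> 0 < d i j)
  (hfeas : F2_feasible A d S P s t m T Rd x y f phi).

Definition used : rel N := [rel u v | A u v && (x u v == 1)].

Definition visited v := (v \in S :|: P) && (y v == 1).

(* At t any negative value would do. *)
Definition budget v :=
  if v == s then T else if v == t then -1 else \sum_(j | A j v) f j v.

Lemma x_ge0 u v : A u v -> 0 <= x u v.
Proof. by move/(F2_x01 hfeas) => [] ->; rewrite ?lexx ?ler01. Qed.

Lemma f_eq0 u v : A u v -> x u v = 0 -> f u v = 0.
Proof.
move=> uv xuv; apply/eqP; rewrite eq_le (F2_fnn hfeas uv) andbT.
have [eus | nus] := eqVneq u s.
  by subst u; rewrite (F2_fs hfeas uv) xuv mulr0.
by move: (F2_fub hfeas uv nus); case: (Rd s u) => [r|[]]; rewrite ?xuv ?mulr0.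
Qed.

Lemma inner_vertex [v] : v != s -> v != t -> v \in S :|: P.
Proof. by move=> vs vt; move: (hN v); rewrite (negbTE vs) (negbTE vt) !orbF. Qed.

Lemma visited_inner [v] : v != s -> v != t -> y v = 1 -> visited v.
Proof. by move=> vs vt yv; rewrite /visited (inner_vertex vs vt) yv eqxx. Qed.

Lemma used_pos [u v] : A u v -> 0 < x u v -> used u v.
Proof.
move=> uv; case: (F2_x01 hfeas uv) => xuv; first by rewrite xuv ltxx.
by rewrite /used /= uv xuv eqxx.
Qed.

Lemma used_src_neq_t [u v] : used u v -> u != t.
Proof.
case/andP=> uv /eqP xuv; apply: contra_neq (@oner_neq0 R) => ut.
rewrite -xuv; rewrite ut in uv *.
exact: (psumr_eq0P (fun k => @x_ge0 t k) (F2_out_t hfeas)).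
Qed.

Lemma used_dst_neq_s [u v] : used u v -> v != s.
Proof.
case/andP=> uv /eqP xuv; apply: contra_neq (@oner_neq0 R) => vs.
rewrite -xuv; rewrite vs in uv *.
exact: (psumr_eq0P (fun k => @x_ge0 k s) (F2_in_s hfeas)).
Qed.

Lemma in_deg [v] : v \in S :|: P -> \sum_(j | A j v) x j v = y v.
Proof.
move=> vSP; move: (F2_cons hfeas vSP); rewrite (F2_deg hfeas vSP).
by move/eqP; rewrite subr_eq0 => /eqP <-.
Qed.

Lemma unit_degree [Pr : pred N] [F : N -> R] [v w] :
    (forall k, Pr k -> 0 <= F k) -> Pr v -> F v = 1 ->
    \sum_(k | Pr k) F k = y w ->
  y w = 1 /\ forall k, Pr k -> k != v -> F k = 0.
Proof.
move=> F0 Pv Fv sumF.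
have yw : y w = 1.
  have := ler_psum_term F0 Pv; rewrite Fv sumF.
  by case: (F2_y01 hfeas w) => ->; rewrite ?ler10.
by split=> //; apply: psumr_eq_term F0 Pv _; rewrite sumF yw Fv.
Qed.

Lemma used_out [u v] : used u v -> u != s ->
  visited u /\ forall w, A u w -> w != v -> x u w = 0.
Proof.
move=> uv' nus; have uSP := inner_vertex nus (used_src_neq_t uv').
case/andP: uv' => uv /eqP xuv.
have [yu oth] := unit_degree (@x_ge0 u) uv xuv (F2_deg hfeas uSP).
by split=> //; rewrite /visited uSP yu eqxx.
Qed.

Lemma used_in [u v] : used u v -> v != t ->
  visited v /\ forall w, A w v -> w != u -> x w v = 0.
Proof.
move=> uv' nvt; have vSP := inner_vertex (used_dst_neq_s uv') nvt.
case/andP: uv' => uv /eqP xuv.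
have [yv oth] := unit_degree (fun k => @x_ge0 k v) uv xuv (in_deg vSP).
by split=> //; rewrite /visited vSP yv eqxx.
Qed.

Lemma visited_pred [w] : visited w -> exists u, used u w.
Proof.
case/andP=> wSP /eqP yw.
have : \sum_(u | A u w) x u w <> 0 by rewrite in_deg // yw; apply/eqP; exact: oner_neq0.
case/(psumr_neq0P (fun u => @x_ge0 u w)) => u /andP[uw xpos].
by exists u; exact: used_pos.
Qed.

Lemma visited_succ [w] : visited w -> exists v, used w v.
Proof.
case/andP=> wSP /eqP yw.
have : \sum_(v | A w v) x w v <> 0.
  by rewrite (F2_deg hfeas wSP) yw; apply/eqP; exact: oner_neq0.
case/(psumr_neq0P (@x_ge0 w)) => v /andP[wv xpos].
by exists v; exact: used_pos.
Qed.

Lemma used_functional u v v' : u != s -> used u v -> used u v' -> v = v'.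
Proof.
move=> nus uv' /andP[uv'' /eqP xuv']; have [_ oth] := used_out uv' nus.
apply/eqP; apply: contraT => nvv.
by move: (oth v' uv''); rewrite eq_sym nvv xuv' => /(_ isT)/eqP; rewrite oner_eq0.
Qed.

Lemma used_f [u v] : used u v -> f u v = budget u - d u v.
Proof.
move=> uv'; have nut := used_src_neq_t uv'.
have [eus | nus] := eqVneq u s.
  case/andP: uv' => uv /eqP xuv; subst u.
  by rewrite /budget eqxx (F2_fs hfeas uv) xuv mulr1.
have [/andP[uSP _] oth] := used_out uv' nus.
case/andP: uv' => uv /eqP xuv.
have out_f : \sum_(j | A u j) f u j = f u v.
  by rewrite (bigD1 v) //= big1 ?addr0 // => k /andP[uk kv]; rewrite f_eq0 ?oth.
have out_time : \sum_(j | A u j) d u j * x u j = d u v.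
  rewrite (bigD1 v) //= big1 ?addr0 ?xuv ?mulr1 // => k /andP[uk kv].
  by rewrite oth ?mulr0.
move: (F2_fcons hfeas uSP); rewrite out_f out_time /budget (negbTE nus) (negbTE nut).
by move=> h; lra.
Qed.

Lemma used_budget [u v] : used u v -> v != t -> budget v = f u v.
Proof.
move=> uv' nvt; have nvs := used_dst_neq_s uv'.
have [_ oth] := used_in uv' nvt; case/andP: uv' => uv _.
rewrite /budget (negbTE nvs) (negbTE nvt) (bigD1 u) //= big1 ?addr0 //.
by move=> k /andP[kv ku]; rewrite f_eq0 ?oth.
Qed.

Lemma budget_decr [u v] : used u v -> budget v < budget u.
Proof.
move=> uv'; have uv : A u v by case/andP: uv'.
have := used_f uv'; have := hd _ _ uv; have := F2_fnn hfeas uv.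
have [-> | nvt] := eqVneq v t.
  by rewrite [budget t]/budget eq_sym (negbTE hst) eqxx; lra.
by rewrite (used_budget uv' nvt); lra.
Qed.

Lemma plen_le_budget [u p] :
  path used u p -> last u p = t -> u != t -> plen d u p <= budget u.
Proof.
elim: p u => [|v p IH] u /=; first by move=> _ ->; rewrite eqxx.
case/andP=> uv' pv lt nut; have uv : A u v by case/andP: uv'.
have := used_f uv'; have := F2_fnn hfeas uv.
have [evt | nvt] := eqVneq v t.
  suff -> : p = [::] by rewrite /= addr0; lra.
  by case: p pv {IH lt} => // w q /andP[/used_src_neq_t]; rewrite evt eqxx.
by have := IH v pv lt nvt; have := used_budget uv' nvt; lra.
Qed.

Lemma connect_visited_src [u w] : connect used u w -> visited w -> u = s \/ visited u.
Proof.
case/connectP=> [[|v p]] /=; first by move=> _ -> vw; right.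
case/andP=> uv' _ _ _; have [-> | nus] := eqVneq u s; first by left.
by right; have [] := used_out uv' nus.
Qed.

Lemma connect_visited_dst [w v] : connect used w v -> visited w -> v = t \/ visited v.
Proof.
case/connectP=> p; elim: p w => [|u p IH] w /=; first by move=> _ -> vw; right.
case/andP=> wu pu ev vw.
have [eut | nut] := eqVneq u t.
  left; case: p pu ev {IH} => [_ -> // | z q /andP[/used_src_neq_t]].
  by rewrite eut eqxx.
exact: IH pu ev (proj1 (used_in wu nut)).
Qed.

Lemma visited_from_s [w] : visited w -> connect used s w.
Proof.
move=> vw; have [u [_ uw usrc]] := potential_source budget_decr predT w isT.
case: (connect_visited_src uw vw) => [<- // | vu].
by have [a au] := visited_pred vu; move: (usrc a au).
Qed.

Lemma visited_to_t [w] : visited w -> connect used w t.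
Proof.
move=> vw; have [v wv vsink] := potential_sink budget_decr w.
case: (connect_visited_dst wv vw) => [<- // | vv].
by have [z vz] := visited_succ vv; move: (vsink z); rewrite vz.
Qed.

Lemma route_through [u1 u2] :
    connect used s u1 -> connect used u1 u2 -> connect used u2 t ->
  exists p, [/\ is_path A s t p, u1 \in s :: p, u2 \in s :: p & plen d s p <= T].
Proof.
move=> /connectP[p1 pp1 e1] /connectP[p2 pp2 e2] /connectP[p3 pp3 e3].
exists (p1 ++ p2 ++ p3).
have pp : path used s (p1 ++ p2 ++ p3) by rewrite !cat_path -e1 -e2 pp1 pp2 pp3.
have lt : last s (p1 ++ p2 ++ p3) = t by rewrite !last_cat -e1 -e2 -e3.
split.
- apply/and3P; split; last exact: potential_path_uniq budget_decr _ _ pp.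
    by apply: sub_path pp => a b /andP[].
  by rewrite lt.
- by rewrite -cat_cons mem_cat e1 mem_last.
- have : u2 \in u1 :: p2 by rewrite e2 mem_last.
  rewrite inE => /orP[/eqP -> | u2p2]; first by rewrite -cat_cons mem_cat e1 mem_last.
  by rewrite inE !mem_cat u2p2 !orbT.
- by have := plen_le_budget pp lt hst; rewrite /budget eqxx.
Qed.

Lemma conflicting_sym [i j] :
  conflicting A d s t T i j -> conflicting A d s t T j i.
Proof. by case=> ? ? ? ? hK; split=> // p sp jp ip; exact: hK. Qed.

Lemma conflicting_unconnected [i j] : conflicting A d s t T i j ->
  visited i -> visited j -> ~~ connect used i j.
Proof.
case=> _ _ _ _ hK vi vj; apply/negP=> ij.
have [p [sp ip jp pT]] := route_through (visited_from_s vi) ij (visited_to_t vj).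
by have := hK p sp ip jp; rewrite ltNge pT.
Qed.

Lemma in_cut_ge0 (V : {set N}) : 0 <= in_cut A V x.
Proof. by apply: sumr_ge0 => e /and3P[/x_ge0]. Qed.

Lemma in_cut_ge_card (V : {set N}) (C : {set N * N}) :
    (forall e, e \in C -> [&& used e.1 e.2, e.1 \notin V & e.2 \in V]) ->
  #|C|%:R <= in_cut A V x.
Proof.
move=> Ccut.
have -> : #|C|%:R = \sum_(e in C) x e.1 e.2.
  rewrite -sumr_const; apply: eq_bigr => e /Ccut.
  by case/and3P=> /andP[_ /eqP ->].
rewrite /in_cut [leRHS](bigID (mem C)) /= -[leLHS]addr0.
apply: lerD; last by apply: sumr_ge0 => e /andP[/and3P[/x_ge0]].
rewrite [leRHS](eq_bigl (mem C)) // => e /=.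
have [eC | _] := boolP (e \in C); rewrite ?andbF // andbT.
by case/and3P: (Ccut e eC) => /andP[-> _] -> ->.
Qed.

Lemma entering_used_arc [V : {set N}] [w] : s \notin V -> w \in V -> visited w ->
  exists2 e, [&& used e.1 e.2, e.1 \notin V & e.2 \in V] & connect used e.2 w.
Proof.
move=> sV wV vw.
have [u [/= uV uw usrc]] := potential_source budget_decr [pred v | v \in V] w wV.
case: (connect_visited_src uw vw) => [eus | vu]; first by rewrite -eus uV in sV.
have [a au] := visited_pred vu.
by exists (a, u); rewrite //= au (usrc a au) uV.
Qed.

Lemma visited_in_cut_ge1 [V : {set N}] [w] : s \notin V -> w \in V -> visited w ->
  1 <= in_cut A V x.
Proof.
move=> sV wV vw; have [e ecut _] := entering_used_arc sV wV vw.
by have := @in_cut_ge_card V [set e]; rewrite cards1; apply=> e'; rewrite inE => /eqP ->.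
Qed.

Lemma conflicting_in_cut_ge2 [V : {set N}] [i j] : conflicting A d s t T i j ->
    s \notin V -> i \in V -> j \in V -> visited i -> visited j ->
  2 <= in_cut A V x.
Proof.
move=> hK sV iV jV vi vj.
have [e ecut ei] := entering_used_arc sV iV vi.
have [e' ecut' ej] := entering_used_arc sV jV vj.
have [ee' | nee'] := eqVneq e e'.
  have nbs : e.2 != s by apply: contraNneq sV => <-; case/and3P: ecut.
  rewrite -ee' in ej.
  case/orP: (connect_comparable used_functional used_dst_neq_s nbs ei ej) => ij.
    by have := conflicting_unconnected hK vi vj; rewrite ij.
  by have := conflicting_unconnected (conflicting_sym hK) vj vi; rewrite ij.
have := @in_cut_ge_card V [set e; e']; rewrite cards2 nee'.
by apply=> e''; rewrite !inE => /orP[] /eqP ->.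
Qed.

End F2Routes.

Theorem proposition2 (R : realFieldType) (N : finType) (A : rel N)
  (d : N -> N -> R) (S P : {set N}) (s t : N) (m : nat) (T : R)
  (Rd : N -> N -> option R)
  (hst : s != t)
  (hSP : [disjoint S & P])
  (hS : s \notin S :|: P) (hT : t \notin S :|: P)
  (hN : forall v : N, (v \in S :|: P) || (v == s) || (v == t))
  (hd : forall i j, A i j -> 0 < d i j)
  (hRd : shortest_dist A d Rd)
  (x : N -> N -> R) (y : N -> R) (f : N -> N -> R) (phi : R)
  (hfeas : F2_feasible A d S P s t m T Rd x y f phi) :
  forall i j, conflicting A d s t T i j ->
  forall V : {set N}, s \notin V -> i \in V -> j \in V ->
    y i + y j <= in_cut A V x.
Proof.
move=> i j hK V sV iV jV; have [nis nit njs njt _] := hK.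
case: (F2_y01 hfeas i) => yi; case: (F2_y01 hfeas j) => yj; rewrite yi yj.
- by rewrite addr0; exact: in_cut_ge0 hfeas V.
- have vj := visited_inner hN njs njt yj.
  by rewrite add0r; exact (visited_in_cut_ge1 hst hN hd hfeas sV jV vj).
- have vi := visited_inner hN nis nit yi.
  by rewrite addr0; exact (visited_in_cut_ge1 hst hN hd hfeas sV iV vi).
- have vi := visited_inner hN nis nit yi; have vj := visited_inner hN njs njt yj.
  exact (conflicting_in_cut_ge2 hst hN hd hfeas hK sV iV jV vi vj).
Qed.
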